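(* Let $G=(V,E)$ be a finite connected graph with $|V|=n$ and let $s:V\to\mathbb{R}$ satisfy $\sum_{x\in V}s(x)=n$. Then $s$ stabilizes to the all $1$ configuration, and the odometer of $s$ is the unique function $u:V\to\mathbb{R}$ satisfying $s+\Delta u=1$ and $\min u=0$.
   Context: $\Delta u(x)=\sum_{y\sim x}(u(y)-u(x))$. $\mathcal{F}_s=\{f:V\to\mathbb{R}: f\ge0,\ s+\Delta f\le1\}$; $s$ stabilizes if $\mathcal{F}_s\ne\emptyset$; the odometer is $u(x)=\inf\{f(x):f\in\mathcal{F}_s\}$; ''stabilizes to the all $1$ configuration'' means $s+\Delta u\equiv1$ for the odometer $u$. *)

From HB Require Import structures.
From mathcomp Require Import all_boot all_order all_algebra.
From mathcomp Require Import boolp classical_sets reals.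
Set Implicit Arguments. Unset Strict Implicit. Unset Printing Implicit Defensive.
Import Order.TTheory GRing.Theory Num.Theory.
Local Open Scope ring_scope.
Local Open Scope classical_set_scope.

Definition simple_graph (V : finType) (e : rel V) : Prop :=
  symmetric e /\ irreflexive e.

Definition connected_graph (V : finType) (e : rel V) : Prop :=
  (0 < #|V|)%N /\ forall x y : V, connect e x y.

Definition lap (R : realType) (V : finType) (e : rel V) (u : V -> R) : V -> R :=
  fun x => \sum_(y | e x y) (u y - u x).

Definition Fs (R : realType) (V : finType) (e : rel V) (s : V -> R) : set (V -> R) :=
  [set f | (forall x, 0 <= f x) /\ (forall x, s x + lap e f x <= 1)].

Definition stabilizes (R : realType) (V : finType) (e : rel V) (s : V -> R) : Prop :=
  Fs e s !=set0.

Definition odometer (R : realType) (V : finType) (e : rel V) (s : V -> R) : V -> R :=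
  fun x => inf [set f x | f in Fs e s].

Definition stabilizes_to_one (R : realType) (V : finType) (e : rel V) (s : V -> R) : Prop :=
  stabilizes e s /\ forall x, s x + lap e (odometer e s) x = 1.

(** The Laplacian of a connected graph has the constants as its kernel, so by
    rank-nullity it maps onto the functions of total sum zero; hence some [w]
    has [s + Delta w = 1], and [u = w - min w] lies in [F_s].  Conversely every
    [f] in [F_s] has [s + Delta f <= 1] pointwise while both sides sum to [n],
    so [Delta f = Delta u]; [f - u] is then harmonic, hence constant, and as
    [u] vanishes somewhere and [f >= 0] that constant is nonnegative.  So [u]
    is the least element of [F_s], i.e. the odometer. *)

From mathcomp Require Import all_boot all_order all_algebra.
From mathcomp Require Import boolp reals.
From mathcomp Require Import ring lra zify.
Import Order.TTheory GRing.Theory Num.Theory.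
Set Implicit Arguments. Unset Strict Implicit.
Local Open Scope ring_scope.

Section Laplacian.
Variables (R : realType) (V : finType) (e : rel V).
Implicit Types (f g t : V -> R).

Lemma lap_indicator g x : lap e g x = \sum_y (e x y)%:R * (g y - g x).
Proof.
rewrite /lap big_mkcond; apply: eq_bigr => y _.
by case: (e x y); rewrite ?mul1r ?mul0r.
Qed.

Lemma lap_addr_const g c x : lap e (fun y => g y + c) x = lap e g x.
Proof. by apply: eq_bigr => y _; rewrite opprD addrACA subrr addr0. Qed.

Lemma lapB f g x : lap e (fun y => f y - g y) x = lap e f x - lap e g x.
Proof. by rewrite /lap -sumrB; apply: eq_bigr => y _; ring. Qed.

Hypothesis e_sym : symmetric e.

Lemma lap_sum_eq0 g : \sum_x lap e g x = 0.
Proof.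
set S := \sum_x _.
suff : S = - S by lra.
rewrite {1}/S (eq_bigr _ (fun x _ => lap_indicator g x)) exchange_big -sumrN.
apply: eq_bigr => x _; rewrite lap_indicator -sumrN; apply: eq_bigr => y _.
by rewrite e_sym -mulrN opprB.
Qed.

Hypothesis e_conn : connected_graph e.

(* Maximum principle: the set where [g] attains its maximum is closed under
   adjacency, since at such a vertex [Delta g] is a sum of nonpositive terms. *)
Lemma lap_eq0_const g : (forall x, lap e g x = 0) -> forall x y, g x = g y.
Proof.
move=> harm; have /card_gt0P [x0 _] := e_conn.1.
have [m _ m_max] := arg_maxP g (isT : predT x0).
have {}m_max y : g y <= g m := m_max y isT.
have max_closed y z : e y z -> g y = g m -> g z = g m.
  move=> eyz gym.
  have gap_ge0 w : e y w -> 0 <= g m - g w by rewrite subr_ge0 m_max.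
  have gap_sum : \sum_(w | e y w) (g m - g w) = - lap e g y.
    by rewrite -gym -sumrN; apply: eq_bigr => w _; rewrite opprB.
  rewrite harm oppr0 in gap_sum.
  by have := psumr_eq0P gap_ge0 gap_sum eyz; lra.
have closed_max : closed e [pred y | g y == g m].
  move=> y z eyz /=; apply/eqP/eqP => [|gzm]; first exact: max_closed.
  by apply: (max_closed z y); rewrite // e_sym.
have all_max y : g y = g m.
  by have := closed_connect closed_max (e_conn.2 m y); rewrite !inE eqxx => /esym/eqP.
by move=> x y; rewrite !all_max.
Qed.

Lemma sum_enum_val (F : V -> R) : \sum_x F x = \sum_(i < #|V|) F (enum_val i).
Proof. by rewrite -big_enum_val. Qed.

Definition fun_row g : 'rV[R]_#|V| := \row_j g (enum_val j).
Definition row_fun (u : 'rV[R]_#|V|) : V -> R := fun x => u 0 (enum_rank x).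

Lemma fun_rowK u : fun_row (row_fun u) = u.
Proof. by apply/rowP => j; rewrite mxE /row_fun enum_valK. Qed.

Lemma fun_rowE g x : fun_row g 0 (enum_rank x) = g x.
Proof. by rewrite mxE enum_rankK. Qed.

Definition ones : 'cV[R]_#|V| := const_mx 1.

Lemma fun_row_sub_ker_ones g : \sum_x g x = 0 -> (fun_row g <= kermx ones)%MS.
Proof.
move=> g_sum; apply/sub_kermxP/rowP => k; rewrite !mxE.
under eq_bigr do rewrite !mxE mulr1.
by rewrite -sum_enum_val.
Qed.

Definition lap_mx : 'M[R]_#|V| :=
  \matrix_(i < #|V|, j < #|V|) ((e (enum_val j) (enum_val i))%:R
     - (i == j)%:R * \sum_(k < #|V|) (e (enum_val j) (enum_val k))%:R).

Lemma mul_lap_mx u : u *m lap_mx = fun_row (lap e (row_fun u)).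
Proof.
apply/rowP => j; rewrite !mxE lap_indicator sum_enum_val.
under eq_bigr do rewrite mxE mulrBr.
rewrite sumrB [X in _ - X](bigD1 j) //= [X in _ - (_ + X)]big1 => [|i /negbTE->].
  by rewrite eqxx mul1r addr0 mulr_sumr -sumrB; apply: eq_bigr => i _;
     rewrite /row_fun !enum_valK; ring.
by rewrite mul0r mulr0.
Qed.

Lemma lap_mx_sub_ker_ones : (lap_mx <= kermx ones)%MS.
Proof.
apply/row_subP => i; rewrite rowE mul_lap_mx.
exact/fun_row_sub_ker_ones/lap_sum_eq0.
Qed.

Lemma ker_lap_mx_sub_const : (kermx lap_mx <= (const_mx 1 : 'rV[R]_#|V|))%MS.
Proof.
have /card_gt0P [x0 _] := e_conn.1.
apply/row_subP => i; set u := row i _.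
have u_ker : u *m lap_mx = 0 by rewrite /u -row_mul mulmx_ker row0.
have u_harm x : lap e (row_fun u) x = 0.
  by have /rowP/(_ (enum_rank x)) := u_ker; rewrite mul_lap_mx fun_rowE mxE.
rewrite -(fun_rowK u); apply/submxP; exists (row_fun u x0)%:M.
apply/rowP => j; rewrite mul_scalar_mx !mxE mulr1.
exact: lap_eq0_const.
Qed.

Lemma ker_ones_sub_lap_mx : (kermx ones <= lap_mx)%MS.
Proof.
have /card_gt0P [x0 _] := e_conn.1.
have rank_ones : \rank ones = 1%N.
  apply/eqP; rewrite eqn_leq rank_leq_col lt0n mxrank_eq0.
  by apply/eqP => /matrixP/(_ (enum_rank x0) 0); rewrite !mxE; apply/eqP/oner_neq0.
have rank_ker := mxrankS ker_lap_mx_sub_const; rewrite mxrank_ker in rank_ker.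
have rank_const := rank_leq_row (const_mx 1 : 'rV[R]_#|V|).
by rewrite -(geq_leqif (mxrank_leqif_sup lap_mx_sub_ker_ones)) mxrank_ker rank_ones; lia.
Qed.

Lemma lap_surjective t : \sum_x t x = 0 -> exists w, forall x, lap e w x = t x.
Proof.
move=> t_sum; have := submx_trans (fun_row_sub_ker_ones t_sum) ker_ones_sub_lap_mx.
case/submxP => u tu; exists (row_fun u) => x.
by rewrite -fun_rowE -mul_lap_mx -tu fun_rowE.
Qed.

End Laplacian.

Section Odometer.
Variables (R : realType) (V : finType) (e : rel V) (s : V -> R).

Lemma odometer_least f :
  Fs e s f -> (forall g, Fs e s g -> forall x, f x <= g x) -> odometer e s = f.
Proof.
move=> Ff f_least; apply: funext => x; apply/le_anti/andP; split.
  by apply: ge_inf; [exists 0 => _ [g [g_ge0 _] <-] | exists f].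
by apply: lb_le_inf; [exists (f x), f | move=> _ [g Fg <-]; apply: f_least].
Qed.

Hypotheses (e_sym : symmetric e) (e_conn : connected_graph e).
Hypothesis s_sum : \sum_x s x = #|V|%:R.

(* [1 - (s + Delta f)] is nonnegative and sums to [n - n - 0 = 0]. *)
Lemma Fs_lap_eq f : Fs e s f -> forall x, s x + lap e f x = 1.
Proof.
case=> _ f_le1 x.
have gap_ge0 y : true -> 0 <= 1 - (s y + lap e f y) by rewrite subr_ge0.
have gap_sum : \sum_y (1 - (s y + lap e f y)) = 0.
  by rewrite sumrB big_split /= lap_sum_eq0 // addr0 s_sum sumr_const subrr.
by have := psumr_eq0P gap_ge0 gap_sum (i:=x) isT; lra.
Qed.

Lemma Fs_shift f g : Fs e s f -> Fs e s g -> forall x y, g x - f x = g y - f y.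
Proof.
move=> Ff Fg; apply: (lap_eq0_const e_sym e_conn) => x.
by rewrite lapB; have := Fs_lap_eq Ff x; have := Fs_lap_eq Fg x; lra.
Qed.

Lemma odometer_zero f x0 : Fs e s f -> f x0 = 0 -> odometer e s = f.
Proof.
move=> Ff fx0; apply: odometer_least => // g Fg x.
have := Fs_shift Ff Fg x x0; have := Fg.1 x0; lra.
Qed.

Lemma Fs_zero_exists : exists f x0, Fs e s f /\ f x0 = 0.
Proof.
have t_sum : \sum_x (1 - s x) = 0 by rewrite sumrB s_sum sumr_const subrr.
have [w lap_w] := lap_surjective e_sym e_conn t_sum.
have /card_gt0P [x0 _] := e_conn.1.
have [m _ m_min] := arg_minP w (isT : predT x0).
have {}m_min y : w m <= w y := m_min y isT.
exists (fun y => w y - w m), m; split; last exact: subrr.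
split=> [y | y]; first by rewrite subr_ge0 m_min.
by rewrite lap_addr_const lap_w addrC subrK.
Qed.

End Odometer.

Theorem lemma7p1 (R : realType) (V : finType) (e : rel V)
  (Hsimple : simple_graph e) (Hconn : connected_graph e) (s : V -> R)
  (Hsum : \sum_(x : V) s x = (#|V|)%:R) :
  stabilizes_to_one e s /\
  ((forall x, s x + lap e (odometer e s) x = 1) /\
   (forall x, 0 <= odometer e s x) /\ (exists x, odometer e s x = 0)) /\
  (forall u : V -> R,
     (forall x, s x + lap e u x = 1) ->
     (forall x, 0 <= u x) -> (exists x, u x = 0) ->
     forall x, u x = odometer e s x).
Proof.
have sym := Hsimple.1.
have [f [x0 [Ff fx0]]] := Fs_zero_exists sym Hconn Hsum.
have od_f := odometer_zero sym Hconn Hsum Ff fx0.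
rewrite /stabilizes_to_one od_f.
have f_eq := Fs_lap_eq sym Hsum Ff.
split; first by split; [exists f | exact: f_eq].
split; first by split=> //; split; [exact: Ff.1 | exists x0].
move=> u u_eq u_ge0 [x1 ux1] x.
have Fu : Fs e s u by split=> // y; rewrite u_eq.
by rewrite -od_f (odometer_zero sym Hconn Hsum Fu ux1).
Qed.
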